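(* Let $k\ge 2$ and let $p,q$ be real polynomials with $\deg p=k$, $\deg q=k-1$, whose roots are real, simple and strictly interlacing, $p_1<q_1<p_2<\dots<q_{k-1}<p_k$. Then every root $z$ of $W(p,q)=p'q-q'p$ satisfies $\left|z-\frac{p_1+p_k}{2}\right|\le\frac{p_k-p_1}{2}$.
   Context: Here $p_1<\dots<p_k$ are the roots of $p$ and $q_1<\dots<q_{k-1}$ the roots of $q$. *)

From HB Require Import structures.
From mathcomp Require Import all_boot all_order all_algebra.
Set Implicit Arguments. Unset Strict Implicit. Unset Printing Implicit Defensive.
Import Order.TTheory GRing.Theory Num.Theory.
Local Open Scope ring_scope.

Definition Wr (C : ringType) (p q : {poly C}) : {poly C} :=
  p^`() * q - q^`() * p.

From HB Require Import structures.
From mathcomp Require Import all_boot all_order all_algebra.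
From mathcomp Require Import ring.
Set Implicit Arguments.
Unset Strict Implicit.
Unset Printing Implicit Defensive.

Import Order.TTheory GRing.Theory Num.Theory.
Local Open Scope ring_scope.

(* Write p = c * prod_i (X - p_i) and P_i = p / (X - p_i).  As deg q < k,
   Lagrange interpolation at the p_i gives q = sum_i l_i P_i with
   l_i = q(p_i) / P_i(p_i), hence W(p, q) = c * sum_i l_i P_i^2, and by
   interlacing every l_i has the sign of the leading coefficient of q.  If z is
   a root outside the disc, conjugating sum_i l_i P_i(z)^2 = 0 and multiplying
   by prod_i (z - p_i)^2 = P_i(z)^2 (z - p_i)^2 gives
   sum_i w_i (u - s_i)^2 = 0 with w_i > 0, u = z - m, s_i = p_i - m, where m
   is the midpoint of [p_1, p_k], so that |s_i| < |u|.  Such a sum cannot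
   vanish: for real u all its terms are positive, and otherwise
   u^* S - u S^* = (u - u^* ) sum_i w_i (|u|^2 - s_i^2) with a positive sum. *)

Section Wronskian.
Variable R : comNzRingType.
Implicit Types (c : R) (p q u v : {poly R}).

Lemma WrZl c p q : Wr (c *: p) q = c *: Wr p q.
Proof. by rewrite /Wr derivZ -scalerAl -scalerAr scalerBr. Qed.

Lemma Wr_linearPr p c u v : Wr p (c *: u + v) = c *: Wr p u + Wr p v.
Proof.
rewrite /Wr derivD derivZ -!mul_polyC; ring.
Qed.

Lemma Wr_sumZr (I : Type) (r : seq I) (P : pred I) (a : I -> R)
    (F : I -> {poly R}) p :
  Wr p (\sum_(i <- r | P i) a i *: F i) = \sum_(i <- r | P i) a i *: Wr p (F i).
Proof.
elim/big_rec2: _ => [|i u v _ <-]; last by rewrite Wr_linearPr.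
by rewrite /Wr deriv0 mul0r mulr0 subrr.
Qed.

Lemma WrMl u v : Wr (u * v) v = u^`() * v ^+ 2.
Proof. rewrite /Wr derivM; ring. Qed.

End Wronskian.

Lemma size_index_enum (T : finType) : size (index_enum T) = #|T|.
Proof. by rewrite [index_enum T]unlock -enumT -cardT. Qed.

Section ProdXsubCOmit.
Variables (R : comNzRingType) (I : finType) (x : I -> R).

Definition prod_XsubC_omit (i : I) : {poly R} :=
  \prod_(j | j != i) ('X - (x j)%:P).

Lemma prod_XsubC_omitP i :
  \prod_j ('X - (x j)%:P) = ('X - (x i)%:P) * prod_XsubC_omit i.
Proof. exact: bigD1. Qed.

Lemma horner_prod_XsubC_omit i z :
  (prod_XsubC_omit i).[z] = \prod_(j | j != i) (z - x j).
Proof. by rewrite horner_prod; apply: eq_bigr => j _; rewrite hornerXsubC. Qed.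

Lemma horner_prod_XsubC_omit_eq0 i j : j != i -> (prod_XsubC_omit i).[x j] = 0.
Proof.
by move=> ji; rewrite horner_prod_XsubC_omit (bigD1 j) //= subrr mul0r.
Qed.

Lemma size_prod_XsubC_omit i : size (prod_XsubC_omit i) = #|I|.
Proof.
have := size_prod_XsubC (index_enum I) x.
rewrite size_index_enum (prod_XsubC_omitP i) mulrC size_Mmonic ?monicXsubC //.
  by rewrite size_XsubC addn2 => -[].
exact/monic_neq0/monic_prod_XsubC.
Qed.

Lemma Wr_prod_XsubC_omit (c : I -> R) :
  Wr (\prod_j ('X - (x j)%:P)) (\sum_i c i *: prod_XsubC_omit i) =
  \sum_i c i *: prod_XsubC_omit i ^+ 2.
Proof.
rewrite Wr_sumZr; apply: eq_bigr => i _.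
by rewrite (prod_XsubC_omitP i) WrMl derivXsubC mul1r.
Qed.

End ProdXsubCOmit.

Section Interpolation.
Variables (K : fieldType) (I : finType) (x : I -> K).
Hypothesis x_inj : injective x.
Local Notation P := (prod_XsubC_omit x).

Lemma uniq_map_index_enum : uniq (map x (index_enum I)).
Proof. by rewrite map_inj_uniq ?index_enum_uniq. Qed.

Lemma horner_prod_XsubC_omit_neq0 i : (P i).[x i] != 0.
Proof.
rewrite horner_prod_XsubC_omit; apply/prodf_neq0 => j ji.
by rewrite subr_eq0 eq_sym (inj_eq x_inj).
Qed.

Lemma lagrange_interpolation (p : {poly K}) : (size p <= #|I|)%N ->
  p = \sum_i (p.[x i] / (P i).[x i]) *: P i.
Proof.
move=> size_p; apply/eqP; rewrite -subr_eq0; apply/negPn/negP => r_neq0.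
set r := p - _ in r_neq0.
have r_roots : all (root r) (map x (index_enum I)).
  apply/allP => _ /mapP[i _ ->].
  rewrite /root hornerD hornerN horner_sum (bigD1 i) //= hornerZ.
  rewrite big1 ?addr0 ?divfK ?horner_prod_XsubC_omit_neq0 ?subrr // => j ji.
  by rewrite hornerZ (@horner_prod_XsubC_omit_eq0 _ _ _ j i) ?mulr0 // eq_sym.
have size_r : (size r <= #|I|)%N.
  rewrite (leq_trans (size_polyD _ _)) // geq_max size_p size_polyN /=.
  apply: leq_trans (size_sum _ _ _) _; apply/bigmax_leqP => i _.
  by rewrite (leq_trans (size_scale_leq _ _)) ?size_prod_XsubC_omit.
have := max_poly_roots r_neq0 r_roots uniq_map_index_enum.
by rewrite size_map size_index_enum ltnNge size_r.
Qed.

Lemma Wr_lagrange (c : K) (q : {poly K}) : (size q <= #|I|)%N ->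
  Wr (c *: \prod_i ('X - (x i)%:P)) q =
  c *: \sum_i (q.[x i] / (P i).[x i]) *: P i ^+ 2.
Proof.
move=> size_q.
by rewrite WrZl {1}(lagrange_interpolation size_q) Wr_prod_XsubC_omit.
Qed.

Lemma prod_XsubC_roots (p : {poly K}) :
  size p = #|I|.+1 -> (forall i, root p (x i)) ->
  p = lead_coef p *: \prod_i ('X - (x i)%:P).
Proof.
move=> size_p p_roots.
have map_roots : all (root p) (map x (index_enum I)).
  by apply/allP => _ /mapP[i _ ->].
have uniq_rs : uniq_roots (map x (index_enum I)).
  by rewrite uniq_rootsE uniq_map_index_enum.
have [r pE] := uniq_roots_prod_XsubC map_roots uniq_rs.
rewrite big_map in pE.
have r_neq0 : r != 0.
  by apply: contra_eqN size_p => /eqP r0; rewrite pE r0 mul0r size_poly0.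
have /size_poly1P[c _ rE] : size r == 1%N.
  move: size_p; rewrite pE size_Mmonic ?monic_prod_XsubC //.
  rewrite size_prod_XsubC size_index_enum addnS /= -add1n => /eqP.
  by rewrite eqn_add2r.
by rewrite pE rE lead_coef_Mmonic ?monic_prod_XsubC // lead_coefC mul_polyC.
Qed.

End Interpolation.

Lemma midpoint_subE (R : numFieldType) (lo hi x : R) :
  x - (lo + hi) / 2 = ((x - lo) - (hi - x)) / 2.
Proof. by field. Qed.

Lemma midpoint_sub_real (R : numFieldType) (lo hi x : R) :
  lo <= x -> x <= hi -> x - (lo + hi) / 2 \is Num.real.
Proof.
move=> lo_x x_hi; rewrite midpoint_subE rpredM ?rpredV ?rpred_nat //.
by rewrite rpredB // ger0_real // subr_ge0.
Qed.

Lemma ler_dist_midpoint (R : numFieldType) (lo hi x : R) :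
  lo <= x -> x <= hi -> `|x - (lo + hi) / 2| <= (hi - lo) / 2.
Proof.
move=> lo_x x_hi.
rewrite midpoint_subE normrM normfV normr_nat ler_pM2r ?invr_gt0 ?ltr0n //.
rewrite (le_trans (ler_normB _ _)) // !ger0_norm ?subr_ge0 //.
by rewrite addrC addrA subrK.
Qed.

Section PositiveWeights.
Variables (C : numClosedFieldType) (I : finType) (i0 : I).

Let psumr_gt0_neq0 (F : I -> C) : (forall i, 0 < F i) -> \sum_i F i != 0.
Proof.
move=> F_gt0; rewrite psumr_neq0 => [|i _]; last exact: ltW.
by apply/hasP; exists i0; rewrite ?mem_index_enum ?F_gt0.
Qed.

Lemma sum_sqr_neq0 (w s : I -> C) (u : C) :
  (forall i, 0 < w i) -> (forall i, s i \is Num.real) ->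
  (forall i, `|s i| < `|u|) ->
  \sum_i w i * (u - s i) ^+ 2 != 0.
Proof.
move=> w_gt0 s_real s_lt_u.
have us_neq0 i : u - s i != 0.
  by rewrite subr_eq0; apply: contraTneq (s_lt_u i) => ->; rewrite ltxx.
have [u_real|] := boolP (u \is Num.real).
  apply: psumr_gt0_neq0 => i; rewrite mulr_gt0 //.
  by rewrite real_exprn_even_gt0 ?rpredB // us_neq0 orbT.
apply: contraNN => /eqP S0; rewrite CrealE eq_sym -subr_eq0.
have S0conj : \sum_i w i * (u^* - s i) ^+ 2 = 0.
  have := congr1 Num.conj S0; rewrite rmorph0 rmorph_sum => conjS0.
  rewrite -[RHS]conjS0; apply: eq_bigr => i _.
  by rewrite rmorphM rmorphXn rmorphB /= (conj_Creal (s_real i))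
    (conj_Creal (gtr0_real (w_gt0 i))).
have : (u - u^*) * \sum_i w i * (u * u^* - s i ^+ 2) == 0.
  apply/eqP; transitivity (u^* * \sum_i w i * (u - s i) ^+ 2
                           - u * \sum_i w i * (u^* - s i) ^+ 2).
    by rewrite !mulr_sumr -sumrB; apply: eq_bigr => i _; ring.
  by rewrite S0 S0conj !mulr0 subrr.
rewrite mulf_eq0 => /orP[//|]; apply: contraLR => _.
apply: psumr_gt0_neq0 => i; rewrite mulr_gt0 // subr_gt0 -normCK.
by rewrite -real_normK // ltrXn2r.
Qed.

Lemma sum_sqr_horner_prod_XsubC_omit_neq0 (e a : I -> C) (m z : C) :
  (forall i, 0 < e i) -> (forall i, a i - m \is Num.real) ->
  (forall i, `|a i - m| < `|z - m|) ->
  \sum_i e i * (prod_XsubC_omit a i).[z] ^+ 2 != 0.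
Proof.
move=> e_gt0 a_real a_lt_z.
pose Q i := (prod_XsubC_omit a i).[z].
have za_neq0 i : z - a i != 0.
  by rewrite subr_eq0; apply: contraTneq (a_lt_z i) => ->; rewrite ltxx.
have Q_neq0 i : Q i != 0.
  by rewrite /Q horner_prod_XsubC_omit; apply/prodf_neq0 => j _.
have QE i : Q i * (z - a i) = \prod_j (z - a j).
  rewrite /Q mulrC -hornerXsubC -hornerM -prod_XsubC_omitP horner_prod.
  by apply: eq_bigr => j _; rewrite hornerXsubC.
have w_gt0 i : 0 < e i * ((Q i)^* * Q i) ^+ 2.
  by rewrite mulr_gt0 // exprn_gt0 // -normCKC exprn_gt0 // normr_gt0.
have := sum_sqr_neq0 w_gt0 a_real a_lt_z.
apply: contraNneq => S0; apply/eqP.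
transitivity ((\prod_j (z - a j)) ^+ 2 * (\sum_i e i * Q i ^+ 2)^*).
  rewrite rmorph_sum mulr_sumr; apply: eq_bigr => i _.
  rewrite rmorphM rmorphXn /= (conj_Creal (gtr0_real (e_gt0 i))) -(QE i).
  ring.
by rewrite S0 rmorph0 mulr0.
Qed.

Lemma sum_sqr_horner_prod_XsubC_omit_root (e a : I -> C) (lo hi z : C) :
  (forall i, 0 < e i) -> (forall i, lo <= a i <= hi) ->
  \sum_i e i * (prod_XsubC_omit a i).[z] ^+ 2 = 0 ->
  `|z - (lo + hi) / 2| <= (hi - lo) / 2.
Proof.
move=> e_gt0 a_in S0.
have a_mid i : `|a i - (lo + hi) / 2| <= (hi - lo) / 2.
  by have /andP[] := a_in i; apply: ler_dist_midpoint.
have r_ge0 : 0 <= (hi - lo) / 2 := le_trans (normr_ge0 _) (a_mid i0).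
rewrite real_leNgt ?normr_real ?ger0_real //; apply/negP => lt_z.
move/eqP: S0; apply/negP; apply: sum_sqr_horner_prod_XsubC_omit_neq0 e_gt0 _ _.
  by move=> i; have /andP[] := a_in i; apply: midpoint_sub_real.
by move=> i; apply: le_lt_trans (a_mid i) lt_z.
Qed.

End PositiveWeights.

Lemma big_ord_omit (R : Type) (idx : R) (op : Monoid.com_law idx) n
    (i : 'I_n.+1) (F : 'I_n.+1 -> R) :
  \big[op/idx]_(l | l != i) F l = \big[op/idx]_(k < n) F (lift i k).
Proof.
rewrite (reindex_omap (lift i) (unlift i)) /=.
  by apply: eq_bigl => k; rewrite eq_sym neq_lift liftK eqxx.
by move=> l; case: unliftP => [k ->|->]; rewrite ?eqxx.
Qed.

Lemma inj_ord_homo_lt (d : Order.disp_t) (T : porderType d) m (f : 'I_m -> T) :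
  (forall i j : 'I_m, (i < j)%N -> (f i < f j)%O) -> injective f.
Proof.
move=> f_lt i j; apply: contra_eq; rewrite -val_eqE neq_ltn => /orP[] /f_lt.
  by move/lt_eqF ->.
by move/gt_eqF ->.
Qed.

Section Interlacing.
Variables (R : numFieldType) (n : nat) (a b : seq R).
Hypothesis interlace : forall i, (i < n)%N -> a`_i < b`_i /\ b`_i < a`_i.+1.

Lemma interlace_lt i j : (i < j <= n)%N -> a`_i < a`_j.
Proof.
move=> /andP[lt_ij le_jn].
apply: (@homo_ltn_in _ [pred k | k <= n]%N (nth 0 a) _ lt_trans) => //=.
  by move=> k l _ le_ln m /andP[_ /ltnW le_ml]; apply: leq_trans le_ml le_ln.
  by move=> k _ /interlace[lt_ab lt_ba]; apply: lt_trans lt_ba.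
by apply: leq_trans le_jn; apply: ltnW.
Qed.

Lemma interlace_le i j : (i <= j <= n)%N -> a`_i <= a`_j.
Proof.
rewrite leq_eqVlt => /andP[/orP[/eqP-> //|lt_ij] le_jn].
by apply/ltW/interlace_lt; rewrite lt_ij.
Qed.

Lemma interlace_lt_ab i j : (i <= j < n)%N -> a`_i < b`_j.
Proof.
move=> /andP[le_ij lt_jn]; have [lt_ab _] := interlace lt_jn.
by apply: le_lt_trans lt_ab; rewrite interlace_le // le_ij ltnW.
Qed.

Lemma interlace_lt_ba i j : (j < i <= n)%N -> b`_j < a`_i.
Proof.
move=> /andP[lt_ji le_in]; have [_ lt_ba] := interlace (leq_trans lt_ji le_in).
by apply: lt_le_trans lt_ba _; rewrite interlace_le // lt_ji.
Qed.

Lemma interlace_lt_bb i j : (i < j < n)%N -> b`_i < b`_j.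
Proof.
move=> /andP[lt_ij lt_jn]; apply: (@lt_trans _ _ a`_j).
  by apply: interlace_lt_ba; rewrite lt_ij ltnW.
by apply: interlace_lt_ab; rewrite leqnn.
Qed.

Lemma interlace_inj_a : injective (fun i : 'I_n.+1 => a`_i).
Proof.
apply: inj_ord_homo_lt => i j lt_ij.
by apply: interlace_lt; rewrite lt_ij -ltnS ltn_ord.
Qed.

Lemma interlace_inj_b : injective (fun j : 'I_n => b`_j).
Proof.
apply: inj_ord_homo_lt => i j lt_ij.
by apply: interlace_lt_bb; rewrite lt_ij ltn_ord.
Qed.

(* Pair the factors a_i - b_j and a_i - a_(lift i j) of the two products: both
   are positive for j < i and both are negative for j >= i. *)
Lemma interlace_lagrange_coef_gt0 (d : R) (i : 'I_n.+1) :
  d \is Num.real -> d != 0 ->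
  0 < d * ((d *: \prod_(j < n) ('X - (b`_j)%:P)).[a`_i] /
           (prod_XsubC_omit (fun l : 'I_n.+1 => a`_l) i).[a`_i]).
Proof.
move=> d_real d_neq0; rewrite hornerZ -mulrA (mulrA d d) -expr2 mulr_gt0 //.
  by rewrite real_exprn_even_gt0 // d_neq0 orbT.
rewrite horner_prod_XsubC_omit horner_prod big_ord_omit -prodf_div.
apply: prodr_gt0 => j _; rewrite hornerXsubC /=.
have [le_ij|lt_ji] := leqP i j.
  rewrite /bump le_ij add1n -divrNN !opprB divr_gt0 // subr_gt0.
    by apply: interlace_lt_ab; rewrite le_ij ltn_ord.
  by apply: interlace_lt; rewrite ltnS le_ij ltn_ord.
have lt_in : (i <= n)%N by rewrite -ltnS ltn_ord.
rewrite /bump leqNgt lt_ji add0n divr_gt0 // subr_gt0.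
  by apply: interlace_lt_ba; rewrite lt_ji.
by apply: interlace_lt; rewrite lt_ji.
Qed.

End Interlacing.

Theorem lemma1 (C : numClosedFieldType) (k : nat) (p q : {poly C})
    (ps qs : seq C) :
  (2 <= k)%N ->
  p \is a polyOver Num.real -> q \is a polyOver Num.real ->
  size p = k.+1 -> size q = k ->
  size ps = k -> size qs = k.-1 ->
  all (fun x => x \is Num.real) ps -> all (fun x => x \is Num.real) qs ->
  all (root p) ps -> all (root q) qs ->
  (forall i, (i < k.-1)%N -> ps`_i < qs`_i /\ qs`_i < ps`_i.+1) ->
  forall z : C, root (Wr p q) z ->
    `|z - (ps`_0 + ps`_k.-1) / 2| <= (ps`_k.-1 - ps`_0) / 2.
Proof.
move=> k_ge2 _ q_real size_p size_q size_ps size_qs _ _ p_roots q_roots.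
case: k k_ge2 size_p size_q size_ps size_qs => [//|n] _.
move=> size_p size_q size_ps size_qs /= interlace z Wz.
pose a (i : 'I_n.+1) := ps`_i; pose b (j : 'I_n) := qs`_j.
have a_inj : injective a := interlace_inj_a interlace.
have b_inj : injective b := interlace_inj_b interlace.
pose P := prod_XsubC_omit a; pose c i := q.[a i] / (P i).[a i].
have pE : p = lead_coef p *: \prod_i ('X - (a i)%:P).
  apply: (prod_XsubC_roots a_inj); first by rewrite card_ord.
  by move=> i; apply: (all_nthP 0 p_roots); rewrite size_ps.
have qE : q = lead_coef q *: \prod_j ('X - (b j)%:P).
  apply: (prod_XsubC_roots b_inj); first by rewrite card_ord.
  by move=> j; apply: (all_nthP 0 q_roots); rewrite size_qs.
have WE : Wr p q = lead_coef p *: \sum_i c i *: P i ^+ 2.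
  by rewrite {1}pE (Wr_lagrange a_inj) // size_q card_ord.
have c_gt0 i : 0 < lead_coef q * c i.
  rewrite /c {2}qE interlace_lagrange_coef_gt0 //.
    by rewrite lead_coefE (polyOverP q_real).
  by rewrite lead_coef_eq0 -size_poly_eq0 size_q.
apply: (sum_sqr_horner_prod_XsubC_omit_root ord0 c_gt0 (a := a)) => [i|].
  have i_le : (i <= n)%N by rewrite -ltnS.
  by rewrite /a !(interlace_le interlace) //; rewrite i_le ?leq0n ?leqnn.
have lp_neq0 : lead_coef p != 0 by rewrite lead_coef_eq0 -size_poly_eq0 size_p.
transitivity (lead_coef q / lead_coef p * (Wr p q).[z]); last first.
  by rewrite (rootP Wz) mulr0.
rewrite WE hornerZ horner_sum mulrA divfK // mulr_sumr.
by apply: eq_bigr => i _; rewrite hornerZ horner_exp [RHS]mulrA.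
Qed.
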